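(* Fix $p\in(0,1)$. Under the Alternating Path Randomized Design with parameter $p$, for every component $\mathcal{P}_i=(v_{i,1},\dots,v_{i,k(i)+1})$ of the decomposition of the disagreement set and every $j\in\{1,\dots,k(i)\}$, \[\mathbb{P}(W_{i,j}=1)=\begin{cases}\dfrac{1-(-p)^{j-1}}{(1+p)^2}, & \text{if }\mathcal{P}_i\text{ is a cycle and } j=k(i),\\[2mm] \dfrac{p}{p+1}, & \text{otherwise.}\end{cases}\]
   Context: Setting: $2N$ agents; $\mathbb{M}^t,\mathbb{M}^c$ are one-to-one matchings (sets of unordered pairs of distinct agents, each agent in at most one pair). The disagreement set $\triangle\mathbb{M}^{(t,c)}=(\mathbb{M}^t\cup\mathbb{M}^c)\setminus(\mathbb{M}^t\cap\mathbb{M}^c)$, viewed as a graph, has connected components $\mathcal{P}_1,\dots,\mathcal{P}_m$, each of which is an alternating path or alternating cycle: a sequence of agents $(v_{i,1},\dots,v_{i,k(i)+1})$ whose consecutive pairs $e_{i,j}=(v_{i,j},v_{i,j+1})$, $j=1,\dots,k(i)$, are the edges of the component, alternating between $\mathbb{M}^t\setminus\mathbb{M}^c$ and $\mathbb{M}^c\setminus\mathbb{M}^t$; it is a cycle if $v_{i,1}=v_{i,k(i)+1}$ and a path otherwise (each component is listed in a fixed orientation and starting point). Alternating Path Randomized Design with parameter $p$: it produces indicators $W_{i,j}\in\{0,1\}$ (edge $e_{i,j}$ is realized iff $W_{i,j}=1$), independently across components $i$. Within $\mathcal{P}_i$: $\mathbb{P}(W_{i,1}=1)=p/(1+p)$;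 for $2\le j\le k(i)$ if $\mathcal{P}_i$ is a path, and for $2\le j\le k(i)-1$ if $\mathcal{P}_i$ is a cycle, conditionally on $W_{i,1},\dots,W_{i,j-1}$ we have $W_{i,j}=1$ with probability $p$ if $W_{i,j-1}=0$ and $W_{i,j}=0$ if $W_{i,j-1}=1$; if $\mathcal{P}_i$ is a cycle, the last indicator is deterministic given the others: $W_{i,k(i)}=1$ if $W_{i,1}=0$ and $W_{i,k(i)-1}=0$, and $W_{i,k(i)}=0$ otherwise. *)

From HB Require Import structures.
From mathcomp Require Import all_boot all_order all_algebra.
Set Implicit Arguments. Unset Strict Implicit. Unset Printing Implicit Defensive.
Import Order.TTheory GRing.Theory Num.Theory.
Local Open Scope ring_scope.

(* A component P_i of the disagreement set is described by its number of edges
   k = k(i) and whether it is a cycle.  Its realization indicators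
   (W_{i,1}, ..., W_{i,k}) are stored in a k.-tuple bool, where the 1-based
   indicator W_{i,n} is [nth false t n.-1]. *)
Definition Wn (k : nat) (t : k.-tuple bool) (n : nat) : bool := nth false t n.-1.

Definition first_prob {R : realFieldType} (p : R) (b : bool) : R :=
  if b then p / (1 + p) else 1 / (1 + p).

(* conditional probability of W_{i,j} = b given W_{i,j-1} = a, for the
   non-deterministic steps *)
Definition step_prob {R : realFieldType} (p : R) (a b : bool) : R :=
  if a then (if b then 0 else 1) else (if b then p else 1 - p).

Definition last_rand (k : nat) (cyc : bool) : nat := if cyc then k.-1 else k.

(* Alternating Path Randomized Design, joint law of the indicators of one
   component (chain rule for the conditional description in the paper). *)
Definition comp_pmf {R : realFieldType} (p : R) (k : nat) (cyc : bool)
    (t : k.-tuple bool) : R :=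
  first_prob p (Wn t 1) *
  (\prod_(2 <= j < (last_rand k cyc).+1) step_prob p (Wn t j.-1) (Wn t j)) *
  (if cyc then (if Wn t k == (~~ Wn t 1 && ~~ Wn t k.-1) then 1 else 0) else 1).

Definition outcome (m : nat) (k : 'I_m -> nat) :=
  {dffun forall i : 'I_m, (k i).-tuple bool}.

Definition design_pmf {R : realFieldType} (p : R) (m : nat) (k : 'I_m -> nat)
    (cyc : 'I_m -> bool) (W : outcome k) : R :=
  \prod_(i < m) comp_pmf p (cyc i) (W i).

Definition design_prob {R : realFieldType} (p : R) (m : nat) (k : 'I_m -> nat)
    (cyc : 'I_m -> bool) (E : pred (outcome k)) : R :=
  \sum_(W : outcome k | E W) design_pmf p cyc W.

From HB Require Import structures.
From mathcomp Require Import all_boot all_order all_algebra.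
From mathcomp Require Import ring.
Import Order.TTheory GRing.Theory Num.Theory.
Local Open Scope ring_scope.

(* Within one component the indicators W_1, W_2, ... form a two-state Markov
   chain started from its stationary law pi = (1/(1+p), p/(1+p)).  Its
   transition matrix has eigenvalues 1 and -p, so the m-step transition
   probabilities are pi(b) + ([a = b] - pi(b)) (-p)^m.  Stationarity gives
   P(W_j = 1) = p/(1+p) at every randomized step.  On a cycle with k edges,
   W_k = 1 exactly when W_1 = W_(k-1) = 0, an event of probability
   pi(0) (pi(0) + pi(1) (-p)^(k-2)) = (1 - (-p)^(k-1))/(1+p)^2.  Components are
   independent and each has total mass 1. *)

Lemma bigA_distr_dffun (R : comPzSemiRingType) (I : finType) (T_ : I -> finType)
    (F : forall i, T_ i -> R) :
  \prod_i \sum_(t : T_ i) F i t = \sum_(f : {dffun forall i, T_ i}) \prod_i F i (f i).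
Proof.
rewrite (reindex (@dffun_of_fprod I T_)); last exact/onW_bij/dffun_of_fprod_bij.
transitivity (\sum_(f : fprod T_) \prod_(i in I) [ffun t => F i t] (f i)); last first.
  by apply: eq_bigr => f _; apply: eq_bigr => i _; rewrite !ffunE.
rewrite big_fprod -(bigA_distr_big_dep _ (fun i => untag 0 [ffun t => F i t])).
apply: eq_bigr => i _; rewrite -(big_tag (fun i => [ffun t => F i t])).
by apply: eq_bigr => t _; rewrite ffunE.
Qed.

Section TupleSums.
Variables (R : Type) (idx : R) (op : Monoid.com_law idx) (T : finType).

Lemma big_tuple0 (F : 0.-tuple T -> R) : \big[op/idx]_(t : 0.-tuple T) F t = F [tuple].
Proof. by rewrite (big_pred1 [tuple]) // => t; apply/esym/eqP; exact: tuple0. Qed.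

Lemma big_tuple_cons n (F : n.+1.-tuple T -> R) :
  \big[op/idx]_(t : n.+1.-tuple T) F t =
  \big[op/idx]_(x : T) \big[op/idx]_(s : n.-tuple T) F [tuple of x :: s].
Proof.
rewrite pair_big (reindex (fun xs : T * n.-tuple T => [tuple of xs.1 :: xs.2])) //=.
exists (fun t => (thead t, behead_tuple t)) => [[x s] _ | t _].
  by congr pair; apply: val_inj.
by case/tupleP: t => x s; apply: val_inj.
Qed.

Lemma big_tuple_rcons n (F : n.+1.-tuple T -> R) :
  \big[op/idx]_(t : n.+1.-tuple T) F t =
  \big[op/idx]_(s : n.-tuple T) \big[op/idx]_(x : T) F [tuple of rcons s x].
Proof.
rewrite pair_big (reindex (fun sx : n.-tuple T * T => [tuple of rcons sx.1 sx.2])) //=.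
exists (fun t => ([tuple of belast (thead t) (behead t)], last (thead t) (behead t)))
  => [[s x] _ | t _].
  rewrite /thead (tnth_nth x); congr pair.
    by apply: val_inj; case: s => [[|y s] sz] //=; rewrite belast_rcons.
  by case: s => [[|y s] sz] //=; rewrite last_rcons.
by case/tupleP: t => x s; apply: val_inj; rewrite /= theadE -lastI.
Qed.

End TupleSums.

Section TwoStateChain.
Variables (R : realFieldType) (p : R).
Hypothesis p1_neq0 : 1 + p != 0.

Fixpoint chain_weight (a : bool) (s : seq bool) : R :=
  if s is b :: s' then step_prob p a b * chain_weight b s' else 1.

(* Closed form of the m-step transition probability (eigenvalues 1 and -p). *)
Definition step_probn (m : nat) (a b : bool) : R :=
  first_prob p b + ((a == b)%:R - first_prob p b) * (- p) ^+ m.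

Lemma sum_step_prob a : \sum_b step_prob p a b = 1.
Proof. by rewrite big_bool; case: a => /=; rewrite ?add0r // addrC subrK. Qed.

Lemma sum_first_prob : \sum_b first_prob p b = 1.
Proof. by rewrite big_bool /first_prob /=; field. Qed.

Lemma step_probn0 a b : step_probn 0 a b = (a == b)%:R.
Proof. by rewrite /step_probn expr0 mulr1 addrC subrK. Qed.

Lemma step_probnS m a b :
  step_probn m.+1 a b = \sum_c step_prob p a c * step_probn m c b.
Proof.
by rewrite big_bool /step_probn /first_prob exprS; case: a; case: b => /=; field.
Qed.

Lemma first_prob_stationary m b :
  \sum_a first_prob p a * step_probn m a b = first_prob p b.
Proof. by rewrite big_bool /step_probn /first_prob; case: b => /=; field. Qed.

Lemma sum_step_probn0 a (f : bool -> R) : \sum_b step_probn 0 a b * f b = f a.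
Proof.
by rewrite big_bool !step_probn0; case: a; rewrite /= ?mul1r ?mul0r ?addr0 ?add0r.
Qed.

Lemma sum_chain_weight_nth n j a (f : bool -> R) : (j <= n)%N ->
  \sum_(s : n.-tuple bool) chain_weight a s * f (nth false (a :: s) j) =
  \sum_b step_probn j a b * f b.
Proof.
elim: n j a f => [|n IHn] j a f.
  by rewrite leqn0 => /eqP ->; rewrite big_tuple0 /= mul1r sum_step_probn0.
rewrite big_tuple_cons; case: j => [_|j le_jn] /=.
  have mass1 c : \sum_(s : n.-tuple bool) chain_weight c s = 1.
    under eq_bigr do rewrite -[chain_weight _ _]mulr1.
    by rewrite (IHn 0%N c (fun=> 1)) // sum_step_probn0.
  under eq_bigr => c _ do rewrite -mulr_suml -mulr_sumr mass1 mulr1.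
  by rewrite -mulr_suml sum_step_prob mul1r sum_step_probn0.
under eq_bigr => c _ do under eq_bigr => s _ do rewrite -mulrA.
under eq_bigr => c _ do rewrite -mulr_sumr IHn // mulr_sumr.
rewrite exchange_big; apply: eq_bigr => b _ /=.
by rewrite step_probnS mulr_suml; apply: eq_bigr => c _; rewrite mulrA.
Qed.

Lemma sum_chain_joint n j (f : bool -> bool -> R) : (j <= n)%N ->
  \sum_a \sum_(s : n.-tuple bool)
     first_prob p a * chain_weight a s * f a (nth false (a :: s) j) =
  \sum_a \sum_b first_prob p a * step_probn j a b * f a b.
Proof.
move=> le_jn; apply: eq_bigr => a _.
under eq_bigr do rewrite -mulrA.
rewrite -mulr_sumr sum_chain_weight_nth // mulr_sumr.
by apply: eq_bigr => b _; rewrite mulrA.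
Qed.

Lemma sum_chain_nth n j (g : bool -> R) : (j <= n)%N ->
  \sum_a \sum_(s : n.-tuple bool)
     first_prob p a * chain_weight a s * g (nth false (a :: s) j) =
  \sum_b first_prob p b * g b.
Proof.
move=> le_jn; rewrite (@sum_chain_joint n j (fun=> g)) // exchange_big.
by apply: eq_bigr => b _; rewrite -mulr_suml first_prob_stationary.
Qed.

Lemma prod_step_prob_take a s r : (r <= size s)%N ->
  \prod_(i < r) step_prob p (nth false (a :: s) i) (nth false s i) =
  chain_weight a (take r s).
Proof.
elim: s a r => [|c s IHs] a [|r] //= le_rs; rewrite ?big_ord0 // big_ord_recl /=.
by under eq_bigr do rewrite add0n; rewrite IHs.
Qed.

Lemma prod_step_prob_Wn k (t : k.-tuple bool) a s r :
  tval t = a :: s -> (r <= size s)%N ->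
  \prod_(2 <= j < r.+2) step_prob p (Wn t j.-1) (Wn t j) = chain_weight a (take r s).
Proof.
move=> def_t le_rs; rewrite -prod_step_prob_take // (big_addn 0 r.+2 2) subn2 big_mkord.
by apply: eq_bigr => i _; rewrite /Wn def_t addn2.
Qed.

Lemma comp_pmf_path n a (s : n.-tuple bool) :
  comp_pmf p false [tuple of a :: s] = first_prob p a * chain_weight a s.
Proof.
rewrite /comp_pmf /last_rand mulr1 (@prod_step_prob_Wn _ _ a s) ?size_tuple //.
by rewrite take_oversize ?size_tuple.
Qed.

Lemma comp_pmf_cycle n a (u : n.-tuple bool) c :
  comp_pmf p true [tuple of a :: rcons u c] =
  first_prob p a * chain_weight a u * (c == ~~ a && ~~ last a u)%:R.
Proof.
rewrite /comp_pmf /last_rand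
  (@prod_step_prob_Wn _ _ a (rcons u c) n) ?size_rcons ?size_tuple //.
have -> : take n (rcons u c) = u by rewrite -cats1 take_size_cat ?size_tuple.
have nth_last_u : nth false (a :: rcons u c) n = last a u.
  by rewrite -rcons_cons nth_rcons /= size_tuple ltnSn (last_nth false) size_tuple.
by rewrite /Wn /= nth_last_u nth_rcons size_tuple ltnn eqxx; case: eqP.
Qed.

Lemma sum_comp_pmf_path n (F : seq bool -> R) :
  \sum_(t : n.+1.-tuple bool) comp_pmf p false t * F t =
  \sum_a \sum_(s : n.-tuple bool) first_prob p a * chain_weight a s * F (a :: s).
Proof.
rewrite big_tuple_cons; apply: eq_bigr => a _; apply: eq_bigr => s _.
by rewrite comp_pmf_path.
Qed.

Lemma sum_comp_pmf_cycle n (F : seq bool -> R) :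
  \sum_(t : n.+2.-tuple bool) comp_pmf p true t * F t =
  \sum_a \sum_(u : n.-tuple bool)
    first_prob p a * chain_weight a u * F (a :: rcons u (~~ a && ~~ last a u)).
Proof.
rewrite big_tuple_cons; apply: eq_bigr => a _; rewrite big_tuple_rcons.
apply: eq_bigr => u _; under eq_bigr do rewrite comp_pmf_cycle.
rewrite big_bool; case: (~~ a && ~~ last a u);
  by rewrite /= ?mulr1 ?mulr0 ?mul0r ?addr0 ?add0r.
Qed.

Lemma sum_comp_pmf cyc k : (if cyc then 2 <= k else 1 <= k)%N ->
  \sum_(t : k.-tuple bool) comp_pmf p cyc t = 1.
Proof.
have mass n :
    \sum_a \sum_(s : n.-tuple bool) first_prob p a * chain_weight a s * 1 = 1.
  rewrite (@sum_chain_nth n 0 (fun=> 1)) //=.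
  by under eq_bigr do rewrite mulr1; exact: sum_first_prob.
case: cyc => hk.
- case: k hk => [|[|n]] // _; under eq_bigr do rewrite -[comp_pmf _ _ _]mulr1.
  by rewrite (sum_comp_pmf_cycle n (fun=> 1)) mass.
- case: k hk => [|n] // _; under eq_bigr do rewrite -[comp_pmf _ _ _]mulr1.
  by rewrite (sum_comp_pmf_path n (fun=> 1)) mass.
Qed.

Lemma comp_marginal cyc k j :
  (if cyc then 2 <= k else 1 <= k)%N -> (1 <= j <= k)%N ->
  \sum_(t : k.-tuple bool) comp_pmf p cyc t * (Wn t j)%:R =
  (if cyc && (j == k)
   then (1 - (- p) ^+ j.-1) / (1 + p) ^+ 2
   else p / (p + 1)).
Proof.
have stationary n i : (i <= n)%N ->
    \sum_a \sum_(s : n.-tuple bool)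
      first_prob p a * chain_weight a s * (nth false (a :: s) i)%:R = p / (p + 1).
  move=> le_in; rewrite (@sum_chain_nth n i (fun b => b%:R)) // big_bool /first_prob /=.
  by rewrite mulr1 mulr0 addr0 addrC.
move=> hk; rewrite /Wn; case: j => [|j] //= le_jk; case: cyc hk => hk /=.
- case: k hk le_jk => [|[|n]] // _ le_jn.
  rewrite (sum_comp_pmf_cycle n (fun t => (nth false t j)%:R)).
  move: le_jn; rewrite ltnS leq_eqVlt => /predU1P[->{j} | lt_jn]; last first.
    have nth_lt a (u : n.-tuple bool) c :
        nth false (a :: rcons u c) j = nth false (a :: u) j.
      by rewrite -rcons_cons nth_rcons /= size_tuple lt_jn.
    under eq_bigr do under eq_bigr do rewrite /= nth_lt.
    by rewrite eqSS ltn_eqF ?stationary.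
  under eq_bigr do under eq_bigr do
    rewrite /= nth_rcons size_tuple ltnn eqxx (last_nth false) size_tuple.
  rewrite (@sum_chain_joint n n (fun a b => (~~ a && ~~ b)%:R)) // eqxx !big_bool.
  by rewrite /step_probn /first_prob /= !exprS; field.
- case: k hk le_jk => [|n] // _ le_jn.
  by rewrite (sum_comp_pmf_path n (fun t => (nth false t j)%:R)) stationary.
Qed.

End TwoStateChain.

Lemma sum_design_pmf_prod (R : realFieldType) (p : R) (m : nat) (k : 'I_m -> nat)
    (cyc : 'I_m -> bool) (f : forall i, (k i).-tuple bool -> R) :
  \sum_(W : outcome k) design_pmf p cyc W * \prod_i f i (W i) =
  \prod_i \sum_(t : (k i).-tuple bool) comp_pmf p (cyc i) t * f i t.
Proof.
by rewrite bigA_distr_dffun; apply: eq_bigr => W _; rewrite /design_pmf -big_split.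
Qed.

Theorem lemma1 (R : realFieldType) (p : R) (hp0 : 0 < p) (hp1 : p < 1)
  (m : nat) (k : 'I_m -> nat) (cyc : 'I_m -> bool)
  (hk : forall i : 'I_m, if cyc i then (4 <= k i)%N && ~~ odd (k i) else (1 <= k i)%N)
  (i : 'I_m) (j : nat) (hj : (1 <= j <= k i)%N) :
  design_prob p cyc (fun W : outcome k => Wn (W i) j) =
  (if cyc i && (j == k i)
   then (1 - (- p) ^+ j.-1) / (1 + p) ^+ 2
   else p / (p + 1)).
Proof.
have p1_neq0 : 1 + p != 0 by rewrite lt0r_neq0 // addr_gt0 ?ltr01.
have k_ge i' : (if cyc i' then 2 <= k i' else 1 <= k i')%N.
  by have := hk i'; case: (cyc i') => // /andP[le4k _]; apply: leq_trans le4k.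
pose f i' (t : (k i').-tuple bool) : R := if i' == i then (Wn t j)%:R else 1.
have -> : design_prob p cyc (fun W : outcome k => Wn (W i) j) =
    \sum_(W : outcome k) design_pmf p cyc W * \prod_i' f i' (W i').
  rewrite /design_prob big_mkcond; apply: eq_bigr => W _.
  rewrite (bigD1 i) //= big1 => [|i' /negbTE]; last by rewrite /f => ->.
  by rewrite /f eqxx mulr1; case: (Wn _ _); rewrite ?mulr1 ?mulr0.
rewrite sum_design_pmf_prod (bigD1 i) //= [X in _ * X]big1 => [|i' /negbTE ne_i'i].
  by rewrite mulr1 /f eqxx comp_marginal.
under eq_bigr do rewrite /f ne_i'i mulr1.
exact: sum_comp_pmf.
Qed.
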